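(* If a soft aura topological space $(X,\widetilde{\tau},\mathfrak{a}_E,E)$ is soft $\mathfrak{a}$-$T_1$, then $\mathrm{cl}_{\mathfrak{a}}(\{x\}_E)=\{x\}_E$ for every $x\in X$.
   Context: For a nonempty set $X$ and nonempty parameter set $E$, a soft set is a map $F:E\to\mathcal{P}(X)$, written $(F,E)$. A soft topology $\widetilde{\tau}$ is a family of soft sets containing the soft sets with all values $\emptyset$ and all values $X$, closed under arbitrary parameterwise unions and finite parameterwise intersections. A soft scope function is a map $\mathfrak{a}_E:X\to\widetilde{\tau}$ with $x\in\mathfrak{a}_E(x)(e)$ for all $x\in X,e\in E$; $(X,\widetilde{\tau},\mathfrak{a}_E,E)$ is a soft aura topological space. $\mathrm{cl}_{\mathfrak{a}}(G,E)(e)=\{y\in X:\mathfrak{a}_E(y)(e)\cap G(e)\neq\emptyset\}$. $\{x\}_E$ denotes the soft set with value $\{x\}$ at every $e\in E$. The space is soft $\mathfrak{a}$-$T_1$ if for all distinct $x,y\in X$ and all $e\in E$, $y\notin\mathfrak{a}_E(x)(e)$ and $x\notin\mathfrak{a}_E(y)(e)$. *)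

Set Implicit Arguments.

Definition soft_set (X E : Type) := E -> X -> Prop.

Definition soft_null (X E : Type) : soft_set X E := fun _ _ => False.
Definition soft_absolute (X E : Type) : soft_set X E := fun _ _ => True.

Definition is_soft_topology (X E : Type) (tau : soft_set X E -> Prop) : Prop :=
  tau (@soft_null X E) /\ tau (@soft_absolute X E) /\
  (forall (I : Type) (G : I -> soft_set X E),
      (forall i, tau (G i)) ->
      tau (fun e x => exists i, G i e x)) /\
  (forall G H : soft_set X E, tau G -> tau H -> tau (fun e x => G e x /\ H e x)).

Definition is_soft_scope (X E : Type) (tau : soft_set X E -> Prop)
  (a : X -> soft_set X E) : Prop :=
  (forall x, tau (a x)) /\ (forall x e, a x e x).

Definition soft_aura_space (X E : Type) (tau : soft_set X E -> Prop)
  (a : X -> soft_set X E) : Prop :=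
  (exists x : X, True) /\ (exists e : E, True) /\
  is_soft_topology tau /\ is_soft_scope tau a.

Definition soft_aura_cl (X E : Type) (a : X -> soft_set X E) (G : soft_set X E)
  : soft_set X E :=
  fun e y => exists z, a y e z /\ G e z.

Definition soft_singleton (X E : Type) (x : X) : soft_set X E :=
  fun _ y => y = x.

Definition soft_a_T1 (X E : Type) (a : X -> soft_set X E) : Prop :=
  forall x y : X, x <> y -> forall e : E, ~ a x e y /\ ~ a y e x.

Definition soft_eq (X E : Type) (F G : soft_set X E) : Prop :=
  forall e x, F e x <-> G e x.

From Stdlib Require Import Classical.

Lemma soft_aura_cl_extensive {X E : Type} (a : X -> soft_set X E)
  (a_refl : forall x e, a x e x) (G : soft_set X E) (e : E) (y : X) :
  G e y -> soft_aura_cl a G e y.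
Proof.
  intros Gy. exists y. split; [apply a_refl | exact Gy].
Qed.

Lemma soft_a_T1_aura_cl_singleton {X E : Type} (a : X -> soft_set X E) :
  soft_a_T1 a ->
  forall (x : X) (e : E) (y : X),
    soft_aura_cl a (@soft_singleton X E x) e y -> y = x.
Proof.
  intros T1 x e y [z [ayz z_eq]]. unfold soft_singleton in z_eq. subst z.
  (* T1 only refutes [y <> x]; X carries no decidable equality. *)
  apply NNPP. intros y_neq. exact (proj1 (T1 y x y_neq e) ayz).
Qed.

Theorem theorem6p6 (X E : Type) (tau : soft_set X E -> Prop)
  (a : X -> soft_set X E) :
  soft_aura_space tau a -> soft_a_T1 a ->
  forall x : X, soft_eq (soft_aura_cl a (@soft_singleton X E x)) (@soft_singleton X E x).
Proof.
  intros [_ [_ [_ [_ a_refl]]]] T1 x e y. split.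
  - apply (soft_a_T1_aura_cl_singleton a T1).
  - apply (soft_aura_cl_extensive a a_refl).
Qed.
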